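(* Let $M \in \mathbb{R}^{d' \times n}$ and $B \in \mathbb{R}^{n \times d}$ be Gale dual, i.e. $\mathrm{im}(B)=\ker(M)$ and $\ker(B)=\{0\}$. Let $S \subseteq \mathbb{R}^n$ be a vector subspace and $A \in \mathbb{R}^{m \times n}$ with $S = \ker(A)$. The following are equivalent: (i) the map $x \mapsto x^M$ is injective on $(x'+S) \cap \mathbb{R}^n_+$ for all $x' \in \mathbb{R}^n_+$; (ii) $\sigma(\ker(M)) \cap \sigma(S) = \{0\}$; (iii) for every $x^* \in \mathbb{R}^n_+$, the map $f_{x^*}\colon \mathbb{R}^d_+ \to \mathbb{R}^m$, $\xi \mapsto A_{x^*}\, \xi^B$, is injective.
   Context: $\mathbb{R}_+$ denotes the strictly positive reals. For $x\in\mathbb{R}^n_+$, $(x^M)_k=\prod_i x_i^{m_{ki}}$; for $\xi\in\mathbb{R}^d_+$, $(\xi^B)_i=\prod_{j}\xi_j^{b_{ij}}$ (real exponents). $A_{x^*}=A\,\mathrm{diag}(x^* )$. $\sigma$ is the componentwise sign vector, $\sigma(T)=\{\sigma(x)\mid x\in T\}$, and $0$ denotes the zero sign vector. *)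

From Stdlib Require Import Reals.
Open Scope R_scope.

(* Vectors in R^n are functions nat -> R, only indices i < n matter.
   Matrices in R^{p x q} are functions nat -> nat -> R (row, column). *)

Fixpoint sumR (n : nat) (f : nat -> R) : R :=
  match n with O => 0 | Datatypes.S k => sumR k f + f k end.

Fixpoint prodR (n : nat) (f : nat -> R) : R :=
  match n with O => 1 | Datatypes.S k => prodR k f * f k end.

Definition mulv (q : nat) (M : nat -> nat -> R) (x : nat -> R) : nat -> R :=
  fun k => sumR q (fun i => M k i * x i).

Definition eqv (n : nat) (x y : nat -> R) : Prop := forall i, (i < n)%nat -> x i = y i.

Definition posv (n : nat) (x : nat -> R) : Prop := forall i, (i < n)%nat -> 0 < x i.

Definition monom (n : nat) (M : nat -> nat -> R) (x : nat -> R) : nat -> R :=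
  fun k => prodR n (fun i => Rpower (x i) (M k i)).

(* A_{xs} = A diag(xs) *)
Definition scale_cols (A : nat -> nat -> R) (xs : nat -> R) : nat -> nat -> R :=
  fun k i => A k i * xs i.

Definition inker (p q : nat) (M : nat -> nat -> R) (x : nat -> R) : Prop :=
  eqv p (mulv q M x) (fun _ => 0).

Definition sgn (r : R) : Z :=
  match Rlt_dec 0 r with
  | left _ => 1%Z
  | right _ => match Rlt_dec r 0 with left _ => (-1)%Z | right _ => 0%Z end
  end.

Definition same_sign (n : nat) (x y : nat -> R) : Prop :=
  forall i, (i < n)%nat -> sgn (x i) = sgn (y i).

Definition sign_zero (n : nat) (x : nat -> R) : Prop :=
  forall i, (i < n)%nat -> sgn (x i) = 0%Z.

Definition gale_dual (d' n d : nat) (M B : nat -> nat -> R) : Prop :=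
  (forall y, inker d' n M y <-> exists xi, eqv n y (mulv d B xi)) /\
  (forall xi, inker n d B xi -> eqv d xi (fun _ => 0)).

(* Everything is transported to logarithmic coordinates: for positive x the
   monomial x^M equals exp (M ln x), so x^M = y^M iff ln x - ln y lies in
   ker M, and sigma(ln x - ln y) = sigma(x - y) because ln is increasing.
   Conversely, a pair (u, v) with sigma(u) = sigma(v) is realised as
   u = ln x - ln y, v = x - y by suitable positive vectors x, y
   (Lemma [sign_pair_realization]).  With these two facts:
   - (i) <-> (ii): a failure of injectivity on x' + S gives a nonzero pair
     (ln x - ln y, x - y) in ker M x S with equal signs, and vice versa;
   - (ii) <-> (iii): by Gale duality ker M = {B z}, and
     A_{x*} xi^B = A_{x*} eta^B says that x* (xi^B - eta^B) lies in ker A,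
     a vector with the sign of B (ln xi - ln eta); injectivity of B turns
     "B z = 0" into "z = 0". *)
From Stdlib Require Import Reals Lra.
Open Scope R_scope.

Lemma sumR_ext n f g :
  (forall i, (i < n)%nat -> f i = g i) -> sumR n f = sumR n g.
Proof. induction n as [|n IH]; simpl; intros H; auto. rewrite IH, H; auto. Qed.

Lemma sumR_minus n f g : sumR n (fun i => f i - g i) = sumR n f - sumR n g.
Proof. induction n as [|n IH]; simpl; [ring | rewrite IH; ring]. Qed.

Lemma sumR_zero n : sumR n (fun _ => 0) = 0.
Proof. induction n as [|n IH]; simpl; [ring | rewrite IH; ring]. Qed.

Lemma mulv_minus q M f g k :
  mulv q M (fun i => f i - g i) k = mulv q M f k - mulv q M g k.
Proof. unfold mulv. rewrite <- sumR_minus. apply sumR_ext; intros; ring. Qed.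

Lemma inker_ext p q M x y :
  (forall i, (i < q)%nat -> x i = y i) -> inker p q M x -> inker p q M y.
Proof.
  unfold inker, eqv, mulv. intros Hxy Hx k Hk. rewrite <- (Hx k Hk).
  apply sumR_ext. intros i Hi. now rewrite Hxy.
Qed.

Lemma inker_zero p q M : inker p q M (fun _ => 0).
Proof.
  intros k _. unfold mulv. transitivity (sumR q (fun _ => 0)).
  - apply sumR_ext; intros; ring.
  - apply sumR_zero.
Qed.

Lemma inker_minus p q M x y :
  inker p q M x -> inker p q M y -> inker p q M (fun i => x i - y i).
Proof.
  intros Hx Hy k Hk. rewrite mulv_minus, (Hx k Hk), (Hy k Hk). apply Rminus_0_r.
Qed.

Lemma prodR_exp n f : prodR n (fun i => exp (f i)) = exp (sumR n f).
Proof.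
  induction n as [|n IH]; simpl; [now rewrite exp_0 | rewrite IH, exp_plus; ring].
Qed.

Lemma monom_exp n M x k : monom n M x k = exp (mulv n M (fun i => ln (x i)) k).
Proof. unfold monom, mulv, Rpower. apply prodR_exp. Qed.

Lemma monom_of_exp n M z k : monom n M (fun i => exp (z i)) k = exp (mulv n M z k).
Proof.
  rewrite monom_exp. f_equal. apply sumR_ext. intros. now rewrite ln_exp.
Qed.

Lemma monom_eq_iff_inker p q M x y :
  eqv p (monom q M x) (monom q M y) <->
  inker p q M (fun i => ln (x i) - ln (y i)).
Proof.
  split; intros H k Hk; specialize (H k Hk).
  - rewrite monom_exp, monom_exp in H. apply exp_inv in H.
    rewrite mulv_minus, H. ring.
  - rewrite mulv_minus in H. rewrite !monom_exp. f_equal. lra.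
Qed.

Lemma scaled_eq_iff_inker m n A xs p q :
  eqv m (mulv n (scale_cols A xs) p) (mulv n (scale_cols A xs) q) <->
  inker m n A (fun i => xs i * (p i - q i)).
Proof.
  unfold eqv, inker, mulv, scale_cols.
  split; intros H k Hk; specialize (H k Hk).
  - transitivity (sumR n (fun i => A k i * xs i * p i)
                  - sumR n (fun i => A k i * xs i * q i)); [|lra].
    rewrite <- sumR_minus. apply sumR_ext; intros; ring.
  - apply Rminus_diag_uniq. rewrite <- sumR_minus, <- H.
    apply sumR_ext; intros; ring.
Qed.

Lemma sgn_pos r : 0 < r -> sgn r = 1%Z.
Proof. intros; unfold sgn; destruct (Rlt_dec 0 r); [auto | lra]. Qed.

Lemma sgn_neg r : r < 0 -> sgn r = (-1)%Z.
Proof.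
  intros; unfold sgn; destruct (Rlt_dec 0 r); [lra |].
  destruct (Rlt_dec r 0); [auto | lra].
Qed.

Lemma sgn_0 : sgn 0 = 0%Z.
Proof. unfold sgn; destruct (Rlt_dec 0 0); [lra |]; destruct (Rlt_dec 0 0); [lra | auto]. Qed.

Lemma sgn_zero_eq r : sgn r = 0%Z -> r = 0.
Proof.
  intros H. destruct (total_order_T 0 r) as [[Hr | Hr] | Hr]; auto.
  - rewrite sgn_pos in H; [discriminate | auto].
  - rewrite sgn_neg in H; [discriminate | auto].
Qed.

Lemma sgn_exp a b : sgn (exp a - exp b) = sgn (a - b).
Proof.
  destruct (total_order_T a b) as [[H | H] | H].
  - pose proof (exp_increasing _ _ H). rewrite !sgn_neg; auto; lra.
  - subst. now replace (exp b - exp b) with (b - b) by ring.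
  - pose proof (exp_increasing _ _ H). rewrite !sgn_pos; auto; lra.
Qed.

Lemma sgn_ln a b : 0 < a -> 0 < b -> sgn (ln a - ln b) = sgn (a - b).
Proof. intros Ha Hb. rewrite <- sgn_exp, !exp_ln; auto. Qed.

Lemma sgn_mulpos c r : 0 < c -> sgn (c * r) = sgn r.
Proof.
  intros Hc. destruct (total_order_T 0 r) as [[H | H] | H].
  - rewrite !sgn_pos; auto. now apply Rmult_lt_0_compat.
  - subst. now rewrite Rmult_0_r.
  - assert (0 < c * - r) by (apply Rmult_lt_0_compat; lra).
    rewrite !sgn_neg; auto; lra.
Qed.

(* Realising a sign-compatible pair: if sgn a = sgn b, then
   c = b / (exp a - 1) (or c = 1 when a = 0) is positive and
   exp a * c - c = b, i.e. a = ln x - ln c and b = x - c for x = exp a * c. *)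
Definition sign_scaling (a b : R) : R :=
  if Req_EM_T a 0 then 1 else b / (exp a - 1).

Lemma sign_scaling_spec a b :
  sgn a = sgn b -> 0 < sign_scaling a b /\ exp a * sign_scaling a b - sign_scaling a b = b.
Proof.
  intros Hab. unfold sign_scaling. destruct (Req_EM_T a 0) as [Ha | Ha].
  - subst. rewrite sgn_0 in Hab. symmetry in Hab. apply sgn_zero_eq in Hab.
    subst. rewrite exp_0. lra.
  - assert (Hsgn : sgn (exp a - 1) = sgn b).
    { rewrite <- exp_0, sgn_exp. now rewrite Rminus_0_r. }
    assert (Hne : exp a - 1 <> 0).
    { intro Z. apply Ha, exp_inv. rewrite exp_0. lra. }
    split; [| field; auto].
    destruct (total_order_T 0 (exp a - 1)) as [[He | He] | He]; [| lra |].
    + rewrite sgn_pos in Hsgn by auto.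
      destruct (total_order_T 0 b) as [[Hb | Hb] | Hb].
      * unfold Rdiv. apply Rmult_lt_0_compat; auto. now apply Rinv_0_lt_compat.
      * subst. now rewrite sgn_0 in Hsgn.
      * now rewrite sgn_neg in Hsgn.
    + rewrite sgn_neg in Hsgn by auto.
      destruct (total_order_T 0 b) as [[Hb | Hb] | Hb].
      * now rewrite sgn_pos in Hsgn.
      * subst. now rewrite sgn_0 in Hsgn.
      * replace (b / (exp a - 1)) with (- b * / - (exp a - 1)) by (field; auto).
        apply Rmult_lt_0_compat; [lra | apply Rinv_0_lt_compat; lra].
Qed.

Lemma sign_pair_realization n u v :
  same_sign n u v ->
  exists y, posv n y /\ forall i, (i < n)%nat -> exp (u i) * y i - y i = v i.
Proof.
  intros Huv. exists (fun i => sign_scaling (u i) (v i)).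
  split; intros i Hi; apply (sign_scaling_spec _ _ (Huv i Hi)).
Qed.

Definition coset_injective (d' n : nat) (M : nat -> nat -> R)
    (S : (nat -> R) -> Prop) : Prop :=
  forall x' : nat -> R, posv n x' ->
    forall x y : nat -> R, posv n x -> posv n y ->
      S (fun i => x i - x' i) -> S (fun i => y i - x' i) ->
      eqv d' (monom n M x) (monom n M y) -> eqv n x y.

Definition sign_condition (d' n : nat) (M : nat -> nat -> R)
    (S : (nat -> R) -> Prop) : Prop :=
  forall u v : nat -> R, inker d' n M u -> S v ->
    same_sign n u v -> sign_zero n u.

Definition scaled_injective (n d m : nat) (B A : nat -> nat -> R) : Prop :=
  forall xs : nat -> R, posv n xs ->
    forall xi eta : nat -> R, posv d xi -> posv d eta ->
      eqv m (mulv n (scale_cols A xs) (monom d B xi))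
            (mulv n (scale_cols A xs) (monom d B eta)) ->
      eqv d xi eta.

Section Equivalences.

Variables d' n d m : nat.
Variables M B A : nat -> nat -> R.
Variable S : (nat -> R) -> Prop.
Hypothesis HS : forall x, S x <-> inker m n A x.

(* (i) -> (ii): realise (u, v) as (ln x - ln y, x - y) with x, y in the
   coset y + S; injectivity forces x = y, hence u = 0. *)
Lemma sign_condition_of_coset_injective :
  coset_injective d' n M S -> sign_condition d' n M S.
Proof.
  intros Hinj u v Hu Hv Huv i0 Hi0.
  destruct (sign_pair_realization n u v Huv) as [y [Hy Hyv]].
  set (x := fun i => exp (u i) * y i).
  assert (Hx : posv n x) by (intros i Hi; apply Rmult_lt_0_compat; [apply exp_pos | auto]).
  assert (Hlog : forall i, (i < n)%nat -> ln (x i) - ln (y i) = u i).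
  { intros i Hi. unfold x. rewrite ln_mult, ln_exp; [ring | apply exp_pos | auto]. }
  assert (Hxy : eqv n x y).
  { apply (Hinj y Hy x y Hx Hy).
    - apply HS, (inker_ext _ _ _ v); [intros i Hi; symmetry; apply Hyv; auto | now apply HS].
    - apply HS, (inker_ext _ _ _ (fun _ => 0)); [intros; ring | apply inker_zero].
    - apply monom_eq_iff_inker, (inker_ext _ _ _ u); auto.
      intros i Hi; symmetry; auto. }
  rewrite <- (Hlog i0 Hi0), (Hxy i0 Hi0), Rminus_diag_eq; auto. apply sgn_0.
Qed.

(* (ii) -> (i): for x, y in the same coset with x^M = y^M, the pair
   (ln x - ln y, x - y) lies in ker M x S and has equal signs. *)
Lemma coset_injective_of_sign_condition :
  sign_condition d' n M S -> coset_injective d' n M S.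
Proof.
  intros Hsign x' Hx' x y Hx Hy Sx Sy Hmon i0 Hi0.
  assert (Hv : S (fun i => x i - y i)).
  { apply HS, (inker_ext _ _ _ (fun i => (x i - x' i) - (y i - x' i))).
    - intros; ring.
    - apply inker_minus; now apply HS. }
  assert (Hu := proj1 (monom_eq_iff_inker _ _ _ _ _) Hmon).
  assert (Huv : same_sign n (fun i => ln (x i) - ln (y i)) (fun i => x i - y i)).
  { intros i Hi. apply sgn_ln; auto. }
  pose proof (sgn_zero_eq _ (Hsign _ _ Hu Hv Huv i0 Hi0)) as Hlog0.
  apply ln_inv; auto. lra.
Qed.

Hypothesis Himage : forall y, inker d' n M y <-> exists xi, eqv n y (mulv d B xi).
Hypothesis Hkernel : forall xi, inker n d B xi -> eqv d xi (fun _ => 0).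

(* (ii) -> (iii): for z = ln xi - ln eta, u = B z lies in ker M and has the
   sign of v = xs * (xi^B - eta^B), which lies in ker A; so B z = 0, z = 0. *)
Lemma scaled_injective_of_sign_condition :
  sign_condition d' n M S -> scaled_injective n d m B A.
Proof.
  intros Hsign xs Hxs xi eta Hxi Heta Hval j0 Hj0.
  set (z := fun j => ln (xi j) - ln (eta j)).
  assert (Hu : inker d' n M (mulv d B z)) by (apply Himage; exists z; intros i _; auto).
  assert (Hv := proj2 (HS _) (proj1 (scaled_eq_iff_inker _ _ _ _ _ _) Hval)).
  assert (Huv : same_sign n (mulv d B z)
                  (fun i => xs i * (monom d B xi i - monom d B eta i))).
  { intros i Hi. rewrite sgn_mulpos, !monom_exp, sgn_exp by auto.
    unfold z. now rewrite mulv_minus. }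
  assert (Hz : inker n d B z).
  { intros i Hi. apply sgn_zero_eq, (Hsign _ _ Hu Hv Huv i Hi). }
  pose proof (Hkernel z Hz j0 Hj0) as Hz0. unfold z in Hz0.
  apply ln_inv; auto. lra.
Qed.

(* (iii) -> (ii): write u = B z and realise v = xs * (exp u - 1) with
   xs > 0; then xi = exp z and eta = exp 0 have the same image under the
   scaled map, so z = 0 and u = 0. *)
Lemma sign_condition_of_scaled_injective :
  scaled_injective n d m B A -> sign_condition d' n M S.
Proof.
  intros Hinj u v Hu Hv Huv i0 Hi0.
  destruct (proj1 (Himage u) Hu) as [z Hz].
  destruct (sign_pair_realization n u v Huv) as [xs [Hxs Hxsv]].
  assert (Hexp : eqv d (fun j => exp (z j)) (fun _ => exp 0)).
  { apply (Hinj xs Hxs); [intros j _; apply exp_pos | intros j _; apply exp_pos |].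
    apply scaled_eq_iff_inker, (inker_ext _ _ _ v); [| now apply HS].
    intros i Hi.
    rewrite !monom_of_exp, <- (Hz i Hi), (inker_zero n d B i Hi), exp_0, <- Hxsv by auto.
    ring. }
  rewrite (Hz i0 Hi0), <- sgn_0. f_equal.
  rewrite <- (inker_zero n d B i0 Hi0). apply sumR_ext.
  intros j Hj. now rewrite (exp_inv _ _ (Hexp j Hj)).
Qed.

End Equivalences.

Theorem mainTheorem17 (d' n d m : nat) (M B A : nat -> nat -> R)
  (S : (nat -> R) -> Prop)
  (HMB : gale_dual d' n d M B)
  (HS : forall x, S x <-> inker m n A x) :
  let cond_i :=
    forall x' : nat -> R, posv n x' ->
      forall x y : nat -> R, posv n x -> posv n y ->
        S (fun i => x i - x' i) -> S (fun i => y i - x' i) ->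
        eqv d' (monom n M x) (monom n M y) -> eqv n x y in
  let cond_ii :=
    forall u v : nat -> R, inker d' n M u -> S v ->
      same_sign n u v -> sign_zero n u in
  let cond_iii :=
    forall xs : nat -> R, posv n xs ->
      forall xi eta : nat -> R, posv d xi -> posv d eta ->
        eqv m (mulv n (scale_cols A xs) (monom d B xi))
              (mulv n (scale_cols A xs) (monom d B eta)) ->
        eqv d xi eta in
  (cond_i <-> cond_ii) /\ (cond_ii <-> cond_iii).
Proof.
  destruct HMB as [Himage Hkernel].
  split; split.
  - exact (sign_condition_of_coset_injective d' n m M A S HS).
  - exact (coset_injective_of_sign_condition d' n m M A S HS).
  - exact (scaled_injective_of_sign_condition d' n d m M B A S HS Himage Hkernel).
  - exact (sign_condition_of_scaled_injective d' n d m M B A S HS Himage).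
Qed.
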